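(* Let $z$ lie in the upper half-plane and let $E_4,\Delta_{24}$ and $h_n$ be as in the context. Then for every positive integer $n$, $$h_n(z)=2E_4(z)^n+\sum_{i=1}^{\lfloor n/3\rfloor}\frac{n}{i}\binom{n-i-1}{2i-1}2^{8i}\Delta_{24}(z)^iE_4(z)^{n-3i}.$$
   Context: For $z$ with $\mathrm{Im}(z)>0$ put $q=e^{\pi\sqrt{-1}z}$ and define $\vartheta_2(z)=\sum_{m\in\mathbb{Z}}q^{(m+1/2)^2}$, $\vartheta_3(z)=\sum_{m\in\mathbb{Z}}q^{m^2}$, $\vartheta_4(z)=\sum_{m\in\mathbb{Z}}(-q)^{m^2}$. Define $E_4(z)=\frac12(\vartheta_2(z)^8+\vartheta_3(z)^8+\vartheta_4(z)^8)$, $\Delta_{24}(z)=\left(\frac{\vartheta_2(z)\vartheta_3(z)\vartheta_4(z)}{2}\right)^8$, and for a nonnegative integer $n$, $h_n(z)=\vartheta_2(z)^{8n}+\vartheta_3(z)^{8n}+\vartheta_4(z)^{8n}$. *)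

From Stdlib Require Import Reals ZArith.
From Coquelicot Require Import Coquelicot.

Open Scope C_scope.

Definition cexp (w : C) : C :=
  (exp (Re w) * cos (Im w), exp (Re w) * sin (Im w))%R.

(* Sum of a complex series, taken componentwise (Coquelicot's [Series]
   is real-valued).  All series below converge absolutely. *)
Definition CSeries (a : nat -> C) : C :=
  (Series (fun k => Re (a k)), Series (fun k => Im (a k))).

Definition sumZ (f : Z -> C) : C :=
  CSeries (fun k => f (Z.of_nat k)) + CSeries (fun k => f (- Z.of_nat (S k))%Z).

(* q^r with q = e^{pi i z}, i.e. e^{pi i z r} for real r. *)
Definition qpow (z : C) (r : R) : C := cexp (RtoC PI * Ci * z * RtoC r).

Definition theta2 (z : C) : C :=
  sumZ (fun m => qpow z ((IZR m + /2) ^ 2)%R).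
Definition theta3 (z : C) : C :=
  sumZ (fun m => qpow z (IZR m ^ 2)%R).
(* (-q)^{m^2} = (-1)^{m^2} q^{m^2}  (m^2 is a nonnegative integer) *)
Definition theta4 (z : C) : C :=
  sumZ (fun m => RtoC ((-1) ^ Z.to_nat (m * m))%R * qpow z (IZR m ^ 2)%R).

Definition E4 (z : C) : C :=
  RtoC (/2) * (pow_n (theta2 z) 8 + pow_n (theta3 z) 8 + pow_n (theta4 z) 8).

Definition Delta24 (z : C) : C :=
  pow_n (theta2 z * theta3 z * theta4 z / RtoC 2) 8.

Definition h (n : nat) (z : C) : C :=
  pow_n (theta2 z) (8 * n) + pow_n (theta3 z) (8 * n) + pow_n (theta4 z) (8 * n).

(* By Jacobi's identity θ3^4 = θ2^4 + θ4^4, the eighth powers x^2, (x+y)^2, y^2 of the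
   thetas, with x = θ2^4 and y = θ4^4, are the roots of T^3 - 2E T^2 + E^2 T - D, where
   E = x^2 + xy + y^2 = E4 and D = (xy(x+y))^2 = 2^8 Δ24.  Hence h_(n+3) = 2E h_(n+2)
   - E^2 h_(n+1) + D h_n, and the right-hand side obeys the same recurrence because
   n/i C(n-i-1, 2i-1) = 2 C(n-i, 2i) + C(n-i-1, 2i-1), a sum of two solutions of a
   Pascal-type recurrence; three initial values then suffice.

   Jacobi's identity is proved on q-expansions.  The coefficient of q^N in θ3^4 - θ4^4 is
   2 r4(N) for odd N and 0 for even N, while in θ2^4 it counts the representations of 4N as
   a sum of four odd squares.  For odd N the Hadamard map v ↦ Hv (H^2 = 4) is a bijection
   from the representations of N onto the odd representations of 4N with coordinate sum
   divisible by 4, and negating one coordinate swaps these with the others.  Truncating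
   the theta series to |m| ≤ M makes all coefficients up to q^(M^2) agree exactly, and the
   remaining tails tend to 0. *)

From Stdlib Require Import Reals ZArith List Lia Lra Psatz Bool.
From Coquelicot Require Import Coquelicot.
Import ListNotations.
Set Bullet Behavior "Strict Subproofs".

(** * Counting with bijections *)

Lemma NoDup_list_prod {A B} (la : list A) (lb : list B) :
  NoDup la -> NoDup lb -> NoDup (list_prod la lb).
Proof.
  induction la as [|a la IH]; intros Ha Hb; cbn [list_prod]; [constructor|].
  inversion_clear Ha as [|? ? Hnotin Hla].
  apply NoDup_app; auto.
  - apply NoDup_map_NoDup_ForallPairs; auto.
    intros x y _ _ E. now injection E.
  - intros [x y] Hx Hy. apply in_map_iff in Hx as [? [E _]]. injection E as <- _.
    now apply in_prod_iff in Hy as [? _].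
Qed.

Lemma filter_length_le_of_retraction {A B} (P : A -> bool) (Q : B -> bool)
    (la : list A) (lb : list B) (f : A -> B) (g : B -> A) :
  NoDup la ->
  (forall x, In x la -> P x = true -> In (f x) lb /\ Q (f x) = true /\ g (f x) = x) ->
  (length (filter P la) <= length (filter Q lb))%nat.
Proof.
  intros Ha Hf. rewrite <- (length_map f).
  apply NoDup_incl_length.
  - apply NoDup_map_NoDup_ForallPairs; [|now apply NoDup_filter].
    intros x y Hx Hy E.
    apply filter_In in Hx as [Hx HPx], Hy as [Hy HPy].
    destruct (Hf x Hx HPx) as [_ [_ <-]], (Hf y Hy HPy) as [_ [_ <-]].
    now rewrite E.
  - intros y Hy. apply in_map_iff in Hy as [x [<- Hx]].
    apply filter_In in Hx as [Hx HPx].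
    destruct (Hf x Hx HPx) as [? [? _]]. now apply filter_In.
Qed.

Lemma filter_length_bij {A B} (P : A -> bool) (Q : B -> bool)
    (la : list A) (lb : list B) (f : A -> B) (g : B -> A) :
  NoDup la -> NoDup lb ->
  (forall x, In x la -> P x = true -> In (f x) lb /\ Q (f x) = true /\ g (f x) = x) ->
  (forall y, In y lb -> Q y = true -> In (g y) la /\ P (g y) = true /\ f (g y) = y) ->
  length (filter P la) = length (filter Q lb).
Proof.
  intros. apply Nat.le_antisymm; eapply filter_length_le_of_retraction; eauto.
Qed.

(** * Lattice points in Z^4 *)

Open Scope Z_scope.

Definition Z4 : Type := Z * Z * Z * Z.

Definition sqnorm (v : Z4) : Z := let '(a, b, c, d) := v in a*a + b*b + c*c + d*d.

(* [shifted_sqnorm v = Σ (v_i + 1/2)^2], the exponents occurring in [theta2 ^ 4]. *)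
Definition shifted_sqnorm (v : Z4) : Z :=
  let '(a, b, c, d) := v in a*(a+1) + b*(b+1) + c*(c+1) + d*(d+1) + 1.

Definition sum4 (v : Z4) : Z := let '(a, b, c, d) := v in a + b + c + d.

Definition all_odd (v : Z4) : bool :=
  let '(a, b, c, d) := v in Z.odd a && Z.odd b && Z.odd c && Z.odd d.

Definition odd_embed (v : Z4) : Z4 :=
  let '(a, b, c, d) := v in (2*a+1, 2*b+1, 2*c+1, 2*d+1).

Definition odd_embed_inv (w : Z4) : Z4 :=
  let '(a, b, c, d) := w in ((a-1)/2, (b-1)/2, (c-1)/2, (d-1)/2).

Definition hadamard (v : Z4) : Z4 :=
  let '(a, b, c, d) := v in (a+b+c+d, a+b-c-d, a-b+c-d, a-b-c+d).

(* An inverse because [hadamard (hadamard v) = 4 v]. *)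
Definition hadamard_inv (w : Z4) : Z4 :=
  let '(a, b, c, d) := hadamard w in (a/4, b/4, c/4, d/4).

Definition flip_last (v : Z4) : Z4 := let '(a, b, c, d) := v in (a, b, c, -d).

Definition zrange (K : nat) : list Z :=
  map Z.of_nat (seq 0 (S K)) ++ map (fun k => - Z.of_nat (S k)) (seq 0 (S K)).

Definition box (K : nat) : list Z4 :=
  list_prod (list_prod (list_prod (zrange K) (zrange K)) (zrange K)) (zrange K).

Lemma in_zrange K m : In m (zrange K) <-> - Z.of_nat K - 1 <= m <= Z.of_nat K.
Proof.
  unfold zrange. rewrite in_app_iff, !in_map_iff. split.
  - intros [[k [<- Hk]] | [k [<- Hk]]]; apply in_seq in Hk; lia.
  - intros Hm. destruct (Z_le_gt_dec 0 m).
    + left. exists (Z.to_nat m). split; [lia|]. apply in_seq; lia.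
    + right. exists (Z.to_nat (- m - 1)). split; [lia|]. apply in_seq; lia.
Qed.

Lemma NoDup_zrange K : NoDup (zrange K).
Proof.
  apply NoDup_app.
  - apply NoDup_map_NoDup_ForallPairs; [intros ? ? _ _; lia | apply seq_NoDup].
  - apply NoDup_map_NoDup_ForallPairs; [intros ? ? _ _; lia | apply seq_NoDup].
  - intros m H1 H2. apply in_map_iff in H1 as [k [<- _]], H2 as [j [E _]]. lia.
Qed.

Lemma NoDup_box K : NoDup (box K).
Proof. repeat apply NoDup_list_prod; apply NoDup_zrange. Qed.

Lemma in_box K a b c d :
  In (a, b, c, d) (box K) <->
  In a (zrange K) /\ In b (zrange K) /\ In c (zrange K) /\ In d (zrange K).
Proof. unfold box. rewrite !in_prod_iff. tauto. Qed.

Lemma zrange_of_sq_le K x : x*x <= Z.of_nat K * Z.of_nat K -> In x (zrange K).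
Proof. rewrite in_zrange. nia. Qed.

Lemma sqnorm_in_box K v : sqnorm v <= Z.of_nat K * Z.of_nat K -> In v (box K).
Proof.
  destruct v as [[[a b] c] d]. cbn. intros H. apply in_box.
  repeat split; apply zrange_of_sq_le; nia.
Qed.

Lemma mul_succ_nonneg x : 0 <= x * (x + 1).
Proof. nia. Qed.

Lemma zrange_of_mul_succ_lt K x : x * (x + 1) < Z.of_nat K * Z.of_nat K -> In x (zrange K).
Proof. rewrite in_zrange. nia. Qed.

Lemma shifted_sqnorm_in_box K v :
  shifted_sqnorm v <= Z.of_nat K * Z.of_nat K -> In v (box K).
Proof.
  destruct v as [[[a b] c] d]. cbn. intros H. apply in_box.
  pose proof (mul_succ_nonneg a); pose proof (mul_succ_nonneg b).
  pose proof (mul_succ_nonneg c); pose proof (mul_succ_nonneg d).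
  repeat split; apply zrange_of_mul_succ_lt; lia.
Qed.

Lemma sqnorm_nonneg v : 0 <= sqnorm v.
Proof.
  destruct v as [[[a b] c] d]. cbn.
  pose proof (Z.square_nonneg a); pose proof (Z.square_nonneg b).
  pose proof (Z.square_nonneg c); pose proof (Z.square_nonneg d). lia.
Qed.

Lemma shifted_sqnorm_pos v : 0 < shifted_sqnorm v.
Proof.
  destruct v as [[[a b] c] d]. cbn.
  pose proof (mul_succ_nonneg a); pose proof (mul_succ_nonneg b).
  pose proof (mul_succ_nonneg c); pose proof (mul_succ_nonneg d). lia.
Qed.

Lemma shifted_sqnorm_odd v : Z.odd (shifted_sqnorm v) = true.
Proof.
  destruct v as [[[a b] c] d]. cbn.
  rewrite !Z.odd_add, !Z.odd_mul, !Z.odd_add.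
  now destruct (Z.odd a), (Z.odd b), (Z.odd c), (Z.odd d).
Qed.

Lemma sqnorm_odd v : Z.odd (sqnorm v) = Z.odd (sum4 v).
Proof.
  destruct v as [[[a b] c] d]. cbn.
  rewrite !Z.odd_add, !Z.odd_mul.
  now destruct (Z.odd a), (Z.odd b), (Z.odd c), (Z.odd d).
Qed.

Ltac split4 := f_equal; [f_equal; [f_equal |] |].

Lemma sqnorm_odd_embed v : sqnorm (odd_embed v) = 4 * shifted_sqnorm v.
Proof. destruct v as [[[a b] c] d]. unfold sqnorm, odd_embed, shifted_sqnorm. ring. Qed.

Lemma sqnorm_hadamard v : sqnorm (hadamard v) = 4 * sqnorm v.
Proof. destruct v as [[[a b] c] d]. unfold sqnorm, hadamard. ring. Qed.

Lemma sqnorm_flip_last v : sqnorm (flip_last v) = sqnorm v.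
Proof. destruct v as [[[a b] c] d]. unfold sqnorm, flip_last. ring. Qed.

Lemma all_odd_flip_last v : all_odd (flip_last v) = all_odd v.
Proof. destruct v as [[[a b] c] d]. cbn. now rewrite Z.odd_opp. Qed.

Lemma flip_last_involutive v : flip_last (flip_last v) = v.
Proof. destruct v as [[[a b] c] d]. cbn. now rewrite Z.opp_involutive. Qed.

Lemma all_odd_odd_embed v : all_odd (odd_embed v) = true.
Proof.
  destruct v as [[[a b] c] d]. unfold all_odd, odd_embed. now rewrite !Z.odd_odd.
Qed.

Lemma odd_embed_inv_odd_embed v : odd_embed_inv (odd_embed v) = v.
Proof.
  destruct v as [[[a b] c] d]. unfold odd_embed_inv, odd_embed.
  split4; Z.to_euclidean_division_equations; lia.
Qed.

Lemma all_odd_spec w : all_odd w = true -> exists v, w = odd_embed v.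
Proof.
  destruct w as [[[a b] c] d]. cbn. rewrite !andb_true_iff, !Z.odd_spec.
  intros [[[[ka ->] [kb ->]] [kc ->]] [kd ->]]. now exists (ka, kb, kc, kd).
Qed.

Lemma all_odd_hadamard v : Z.odd (sum4 v) = true -> all_odd (hadamard v) = true.
Proof.
  destruct v as [[[a b] c] d]. cbn. intros Hs.
  replace (a+b-c-d) with (a+b+c+d + 2*(-c-d)) by ring.
  replace (a-b+c-d) with (a+b+c+d + 2*(-b-d)) by ring.
  replace (a-b-c+d) with (a+b+c+d + 2*(-b-c)) by ring.
  now rewrite !Z.odd_add_mul_2, Hs.
Qed.

Lemma hadamard_inv_hadamard v : hadamard_inv (hadamard v) = v.
Proof.
  destruct v as [[[a b] c] d]. unfold hadamard_inv, hadamard.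
  split4; Z.to_euclidean_division_equations; lia.
Qed.

Lemma hadamard_hadamard_inv w :
  all_odd w = true -> sum4 w mod 4 = 0 -> hadamard (hadamard_inv w) = w.
Proof.
  intros Hodd. destruct (all_odd_spec w Hodd) as [[[[a b] c] d] ->].
  unfold sum4, odd_embed, hadamard_inv, hadamard. intros Hs.
  assert (Ht : exists t, a + b + c + d = 2 * t)
    by (exists ((a + b + c + d) / 2); Z.to_euclidean_division_equations; lia).
  destruct Ht as [t Ht]. cbv beta iota.
  split4; Z.to_euclidean_division_equations; lia.
Qed.

Lemma sum4_hadamard_mod4 v : sum4 (hadamard v) mod 4 = 0.
Proof.
  destruct v as [[[a b] c] d]. cbn.
  replace (a+b+c+d + (a+b-c-d) + (a-b+c-d) + (a-b-c+d)) with (a * 4) by ring.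
  apply Z.mod_mul. lia.
Qed.

Lemma sum4_flip_last_mod4 w :
  all_odd w = true -> (sum4 (flip_last w) mod 4 =? 0) = negb (sum4 w mod 4 =? 0).
Proof.
  intros Hodd. destruct (all_odd_spec w Hodd) as [[[[a b] c] d] ->].
  unfold sum4, flip_last, odd_embed.
  destruct (Z.eqb_spec ((2*a+1 + (2*b+1) + (2*c+1) + (2*d+1)) mod 4) 0),
    (Z.eqb_spec ((2*a+1 + (2*b+1) + (2*c+1) + - (2*d+1)) mod 4) 0); cbn;
    Z.to_euclidean_division_equations; lia.
Qed.

Definition count (P : Z4 -> bool) (K : nat) : nat := length (filter P (box K)).

Lemma count_bij (P Q : Z4 -> bool) (K L : nat) (f g : Z4 -> Z4) :
  (forall v, In v (box K) -> P v = true -> In (f v) (box L) /\ Q (f v) = true /\ g (f v) = v) ->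
  (forall w, In w (box L) -> Q w = true -> In (g w) (box K) /\ P (g w) = true /\ f (g w) = w) ->
  count P K = count Q L.
Proof. apply filter_length_bij; apply NoDup_box. Qed.

Lemma count_split (P Q : Z4 -> bool) (K : nat) :
  count P K = (count (fun v => P v && Q v) K + count (fun v => P v && negb (Q v)) K)%nat.
Proof.
  unfold count. induction (box K) as [|v l IH]; cbn; [easy|].
  destruct (P v), (Q v); cbn; lia.
Qed.

Lemma count_shifted_sqnorm (M N : nat) : (N <= M * M)%nat ->
  count (fun v => shifted_sqnorm v =? Z.of_nat N) M =
  count (fun w => all_odd w && (sqnorm w =? 4 * Z.of_nat N)) (4 * N).
Proof.
  intros HN. apply (count_bij _ _ _ _ odd_embed odd_embed_inv).
  - intros v _ Hv. apply Z.eqb_eq in Hv.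
    rewrite all_odd_odd_embed, sqnorm_odd_embed, Hv, Z.eqb_refl, odd_embed_inv_odd_embed.
    repeat split. apply sqnorm_in_box. rewrite sqnorm_odd_embed, Hv, Nat2Z.inj_mul. nia.
  - intros w _ Hw. apply andb_true_iff in Hw as [Hodd Hw]. apply Z.eqb_eq in Hw.
    destruct (all_odd_spec w Hodd) as [v ->].
    rewrite sqnorm_odd_embed in Hw. rewrite odd_embed_inv_odd_embed.
    repeat split.
    + apply shifted_sqnorm_in_box. lia.
    + apply Z.eqb_eq. lia.
Qed.

Lemma count_sqnorm_odd (M N : nat) : Z.odd (Z.of_nat N) = true -> (N <= M * M)%nat ->
  count (fun v => sqnorm v =? Z.of_nat N) M =
  count (fun w => all_odd w && (sqnorm w =? 4 * Z.of_nat N) && (sum4 w mod 4 =? 0)) (4 * N).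
Proof.
  intros Hodd HN. apply (count_bij _ _ _ _ hadamard hadamard_inv).
  - intros v _ Hv. apply Z.eqb_eq in Hv.
    rewrite all_odd_hadamard by now rewrite <- sqnorm_odd, Hv.
    rewrite sqnorm_hadamard, Hv, Z.eqb_refl, sum4_hadamard_mod4, hadamard_inv_hadamard.
    repeat split. apply sqnorm_in_box. rewrite sqnorm_hadamard, Hv, Nat2Z.inj_mul. nia.
  - intros w _ Hw. apply andb_true_iff in Hw as [Hw Hmod].
    apply andb_true_iff in Hw as [Hw_odd Hw]. apply Z.eqb_eq in Hw, Hmod.
    pose proof (hadamard_hadamard_inv w Hw_odd Hmod) as Hinv.
    assert (Hnorm : sqnorm (hadamard_inv w) = Z.of_nat N)
      by (pose proof (sqnorm_hadamard (hadamard_inv w)); rewrite Hinv in *; lia).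
    repeat split; auto.
    + apply sqnorm_in_box. lia.
    + now apply Z.eqb_eq.
Qed.

Lemma flip_last_swaps_mod4 (S : Z) (K : nat) (b : bool) w :
  S <= Z.of_nat K * Z.of_nat K ->
  all_odd w && (sqnorm w =? S) && xorb b (sum4 w mod 4 =? 0) = true ->
  In (flip_last w) (box K) /\
  all_odd (flip_last w) && (sqnorm (flip_last w) =? S)
    && xorb (negb b) (sum4 (flip_last w) mod 4 =? 0) = true /\
  flip_last (flip_last w) = w.
Proof.
  intros HS Hw. apply andb_true_iff in Hw as [Hw Hmod].
  apply andb_true_iff in Hw as [Hodd Hw]. apply Z.eqb_eq in Hw.
  rewrite all_odd_flip_last, sqnorm_flip_last, sum4_flip_last_mod4, flip_last_involutive, Hodd, Hw
    by exact Hodd.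
  repeat split.
  - apply sqnorm_in_box. rewrite sqnorm_flip_last. lia.
  - rewrite Z.eqb_refl. now destruct b, (sum4 w mod 4 =? 0).
Qed.

Lemma count_flip_last (S : Z) (K : nat) : S <= Z.of_nat K * Z.of_nat K ->
  count (fun w => all_odd w && (sqnorm w =? S) && (sum4 w mod 4 =? 0)) K =
  count (fun w => all_odd w && (sqnorm w =? S) && negb (sum4 w mod 4 =? 0)) K.
Proof.
  intros HS. apply (count_bij _ _ _ _ flip_last flip_last); intros w _.
  - exact (flip_last_swaps_mod4 S K false w HS).
  - exact (flip_last_swaps_mod4 S K true w HS).
Qed.

Lemma count_shifted_sqnorm_odd (M N : nat) : Z.odd (Z.of_nat N) = true -> (N <= M * M)%nat ->
  count (fun v => shifted_sqnorm v =? Z.of_nat N) M =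
  (2 * count (fun v => (sqnorm v =? Z.of_nat N)%Z) M)%nat.
Proof.
  intros Hodd HN.
  rewrite count_shifted_sqnorm, (count_split _ (fun w => sum4 w mod 4 =? 0)) by exact HN.
  rewrite <- count_flip_last by (rewrite Nat2Z.inj_mul; nia).
  rewrite <- (count_sqnorm_odd M N) by assumption. lia.
Qed.

Lemma count_shifted_sqnorm_even (M N : nat) : Z.odd (Z.of_nat N) = false ->
  count (fun v => shifted_sqnorm v =? Z.of_nat N) M = 0%nat.
Proof.
  intros Heven. unfold count.
  rewrite (filter_ext _ (fun _ => false)), filter_false; [easy|].
  intros v. apply Z.eqb_neq. intros Hv.
  pose proof (shifted_sqnorm_odd v) as Hodd. congruence.
Qed.

Close Scope Z_scope.

(** * Binomial coefficients *)

Section Binomials.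
Local Open Scope nat_scope.

Fixpoint binom (n k : nat) : nat :=
  match n, k with
  | _, O => 1
  | O, S _ => 0
  | S n', S k' => binom n' k' + binom n' (S k')
  end.

Lemma binom_n_0 n : binom n 0 = 1.
Proof. now destruct n. Qed.

Lemma binom_small n k : n < k -> binom n k = 0.
Proof.
  revert k. induction n as [|n IH]; intros [|k] Hk; cbn; try lia.
  rewrite !IH by lia. reflexivity.
Qed.

Lemma binom_n_1 n : binom n 1 = n.
Proof. induction n as [|n IH]; cbn; [easy|]. now rewrite binom_n_0, IH. Qed.

Lemma Binomial_C_n_n n : Binomial.C n n = 1%R.
Proof.
  unfold Binomial.C. rewrite Nat.sub_diag. cbn [fact INR].
  field. apply INR_fact_neq_0.
Qed.

Lemma Binomial_C_n_0 n : Binomial.C n 0 = 1%R.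
Proof.
  unfold Binomial.C. rewrite Nat.sub_0_r. change (fact 0) with 1. cbn [INR].
  field. apply INR_fact_neq_0.
Qed.

Lemma binom_INR n k : k <= n -> INR (binom n k) = Binomial.C n k.
Proof.
  revert k. induction n as [|n IH]; intros [|k] Hk;
    try (rewrite binom_n_0, Binomial_C_n_0; reflexivity); [lia|].
  cbn [binom]. rewrite plus_INR, IH by lia.
  destruct (Nat.eq_dec k n) as [-> | Hkn].
  - now rewrite (binom_small n (S n)), Rplus_0_r, !Binomial_C_n_n by lia.
  - rewrite IH by lia. apply pascal. lia.
Qed.

Lemma Binomial_C_succ m k : k <= m ->
  Binomial.C (S m) (S k) = (INR (S m) / INR (S k) * Binomial.C m k)%R.
Proof.
  intros Hk. unfold Binomial.C. replace (S m - S k) with (m - k) by lia.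
  rewrite !fact_simpl, !mult_INR.
  field. repeat split; apply INR_fact_neq_0 || (apply not_0_INR; lia).
Qed.

Lemma binom_second_diff m k :
  binom (m + 2) (k + 2) + binom m (k + 2) = 2 * binom (m + 1) (k + 2) + binom m k.
Proof.
  replace (m + 2) with (S (S m)) by lia. replace (m + 1) with (S m) by lia.
  replace (k + 2) with (S (S k)) by lia. cbn [binom]. lia.
Qed.

(* The disjunct [1 <= k] covers [t < s], where truncated subtraction collapses the upper
   indices to [0]. *)
Lemma binom_second_diff_sub t s k : (s <= t \/ 1 <= k) ->
  binom (t + 2 - s) (k + 2) + binom (t - s) (k + 2) =
  2 * binom (t + 1 - s) (k + 2) + binom (t - s) k.
Proof.
  intros Hsk. destruct (le_lt_dec s t) as [Hst | Hts].
  - replace (t + 2 - s) with (t - s + 2) by lia.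
    replace (t + 1 - s) with (t - s + 1) by lia. apply binom_second_diff.
  - replace (t - s) with 0 by lia. rewrite !binom_small by lia. lia.
Qed.

(* [2 C(n-i, 2i) + C(n-i-1, 2i-1)] is an integral form of the coefficient [n/i C(n-i-1, 2i-1)]
   of the theorem ([waring_coeff_eq]); unlike it, each summand obeys a Pascal-type recurrence. *)
Definition waring_coeff (n i : nat) : nat :=
  2 * binom (n - i) (2 * i) + match i with O => 0 | S j => binom (n - i - 1) (2 * j + 1) end.

Lemma waring_coeff_0 n : waring_coeff n 0 = 2.
Proof. unfold waring_coeff. now rewrite binom_n_0. Qed.

Lemma waring_coeff_vanish n i : n < 3 * i -> waring_coeff n i = 0.
Proof.
  intros Hi. unfold waring_coeff. destruct i as [|j]; [lia|].
  rewrite !binom_small by lia. reflexivity.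
Qed.

Lemma waring_coeff_eq n i : 1 <= i -> 3 * i <= n ->
  INR (waring_coeff n i) = (INR n / INR i * Binomial.C (n - i - 1) (2 * i - 1))%R.
Proof.
  intros Hi Hin. destruct i as [|j]; [lia|]. unfold waring_coeff.
  set (m := n - S j - 1).
  assert (Hn : n = m + S j + 1) by lia.
  replace (2 * S j - 1) with (2 * j + 1) by lia.
  replace (2 * S j) with (S (2 * j + 1)) by lia.
  replace (n - S j) with (S m) by lia.
  rewrite plus_INR, mult_INR, !binom_INR, Binomial_C_succ by lia.
  rewrite Hn. repeat rewrite ?plus_INR, ?mult_INR, ?S_INR. cbn [INR].
  pose proof (pos_INR j). field. lra.
Qed.

Lemma waring_coeff_S n j :
  waring_coeff n (S j) = 2 * binom (n - S j) (2 * S j) + binom (n - S j - 1) (2 * j + 1).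
Proof. reflexivity. Qed.

Lemma binom_even_part_rec n j :
  binom (n + 3 - S j) (2 * S j) + binom (n + 1 - S j) (2 * S j) =
  2 * binom (n + 2 - S j) (2 * S j) + binom (n - j) (2 * j).
Proof.
  replace (2 * S j) with (2 * j + 2) by lia.
  replace (n + 3 - S j) with (n + 1 + 2 - S j) by lia.
  replace (n + 2 - S j) with (n + 1 + 1 - S j) by lia.
  replace (n - j) with (n + 1 - S j) by lia.
  apply binom_second_diff_sub. lia.
Qed.

Lemma binom_odd_part_rec n j :
  binom (n + 3 - S (S j) - 1) (2 * S j + 1) + binom (n + 1 - S (S j) - 1) (2 * S j + 1) =
  2 * binom (n + 2 - S (S j) - 1) (2 * S j + 1) + binom (n - S j - 1) (2 * j + 1).
Proof.
  replace (2 * S j + 1) with (2 * j + 1 + 2) by lia.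
  replace (n + 3 - S (S j) - 1) with (n + 2 - (j + 2)) by lia.
  replace (n + 1 - S (S j) - 1) with (n - (j + 2)) by lia.
  replace (n + 2 - S (S j) - 1) with (n + 1 - (j + 2)) by lia.
  replace (n - S j - 1) with (n - (j + 2)) by lia.
  apply binom_second_diff_sub. lia.
Qed.

Lemma waring_coeff_rec n i : 1 <= n ->
  waring_coeff (n + 3) i + waring_coeff (n + 1) i =
  2 * waring_coeff (n + 2) i + match i with O => 0 | S j => waring_coeff n j end.
Proof.
  intros Hn. destruct i as [|[|j]].
  - rewrite !waring_coeff_0. lia.
  - rewrite !waring_coeff_S, waring_coeff_0. change (2 * 0 + 1) with 1.
    pose proof (binom_even_part_rec n 0) as H. change (2 * 0) with 0 in H.
    rewrite !binom_n_1. rewrite binom_n_0 in H. lia.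
  - rewrite !waring_coeff_S.
    pose proof (binom_even_part_rec n (S j)). pose proof (binom_odd_part_rec n j). lia.
Qed.

End Binomials.

(** * Finite sums, nome powers and limits in C *)

Open Scope C_scope.

Definition sum_list {A} (l : list A) (f : A -> C) : C :=
  fold_right (fun x s => f x + s) 0 l.

Lemma sum_list_nil {A} (f : A -> C) : sum_list [] f = 0.
Proof. reflexivity. Qed.

Lemma sum_list_cons {A} x (l : list A) f : sum_list (x :: l) f = f x + sum_list l f.
Proof. reflexivity. Qed.

Ltac sum_list_simpl :=
  cbn [app map list_prod filter length negb]; rewrite ?sum_list_nil, ?sum_list_cons.

Lemma sum_list_app {A} (l1 l2 : list A) f :
  sum_list (l1 ++ l2) f = sum_list l1 f + sum_list l2 f.
Proof. induction l1 as [|x l1 IH]; sum_list_simpl; [ring|]. rewrite IH. ring. Qed.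

Lemma sum_list_map {A B} (g : A -> B) l f :
  sum_list (map g l) f = sum_list l (fun x => f (g x)).
Proof. induction l as [|x l IH]; sum_list_simpl; [easy|]. now rewrite IH. Qed.

Lemma sum_list_ext {A} (l : list A) f g :
  (forall x, In x l -> f x = g x) -> sum_list l f = sum_list l g.
Proof.
  induction l as [|x l IH]; sum_list_simpl; intros H; [easy|].
  rewrite H, IH; auto using in_eq, in_cons.
Qed.

Lemma sum_list_zero {A} (l : list A) (f : A -> C) :
  (forall x, In x l -> f x = 0) -> sum_list l f = 0.
Proof.
  induction l as [|x l IH]; sum_list_simpl; intros H; [easy|].
  rewrite H, IH; auto using in_eq, in_cons. ring.
Qed.

Lemma sum_list_scal {A} (l : list A) c f :
  sum_list l (fun x => c * f x) = c * sum_list l f.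
Proof. induction l as [|x l IH]; sum_list_simpl; [ring|]. rewrite IH. ring. Qed.

Lemma sum_list_plus {A} (l : list A) f g :
  sum_list l (fun x => f x + g x) = sum_list l f + sum_list l g.
Proof. induction l as [|x l IH]; sum_list_simpl; [ring|]. rewrite IH. ring. Qed.

Lemma sum_list_minus {A} (l : list A) f g :
  sum_list l (fun x => f x - g x) = sum_list l f - sum_list l g.
Proof. induction l as [|x l IH]; sum_list_simpl; [ring|]. rewrite IH. ring. Qed.

Lemma sum_list_prod {A B} (l1 : list A) (l2 : list B) f g :
  sum_list (list_prod l1 l2) (fun p => f (fst p) * g (snd p)) = sum_list l1 f * sum_list l2 g.
Proof.
  induction l1 as [|x l1 IH]; sum_list_simpl; [ring|].
  rewrite sum_list_app, sum_list_map, IH. cbn [fst snd]. rewrite sum_list_scal. ring.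
Qed.

Lemma sum_list_filter {A} (P : A -> bool) (l : list A) f :
  sum_list l f = sum_list (filter P l) f + sum_list (filter (fun x => negb (P x)) l) f.
Proof.
  induction l as [|x l IH]; sum_list_simpl; [ring|].
  destruct (P x); sum_list_simpl; rewrite IH; ring.
Qed.

Lemma Cmod_sum_list_le {A} (l : list A) f (B : R) :
  (forall x, In x l -> Cmod (f x) <= B)%R -> (Cmod (sum_list l f) <= INR (length l) * B)%R.
Proof.
  induction l as [|x l IH]; sum_list_simpl; intros H.
  - rewrite Cmod_0. cbn [INR]. lra.
  - rewrite S_INR. eapply Rle_trans; [apply Cmod_triangle|].
    assert (Cmod (f x) <= B)%R by auto using in_eq.
    assert (Cmod (sum_list l f) <= INR (length l) * B)%R by auto using in_cons.
    lra.
Qed.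

Lemma sum_list_seq_indicator (m a n : nat) (G : nat -> C) :
  sum_list (seq a n) (fun N => if m =? N then G N else 0) =
  if (a <=? m) && (m <? a + n) then G m else 0.
Proof.
  revert a. induction n as [|n IH]; intros a; cbn [seq]; rewrite ?sum_list_nil, ?sum_list_cons.
  - destruct (Nat.leb_spec a m), (Nat.ltb_spec m (a + 0)); cbn; easy || lia.
  - rewrite IH.
    destruct (Nat.eqb_spec m a) as [<-|Hma];
      repeat match goal with
      | |- context [?x <=? ?y] => destruct (Nat.leb_spec x y)
      | |- context [?x <? ?y] => destruct (Nat.ltb_spec x y)
      end; cbn; try ring; lia.
Qed.

Lemma sum_list_group {A} (l : list A) (k : A -> nat) (G : nat -> C) (K : nat) :
  sum_list (filter (fun v => k v <=? K) l) (fun v => G (k v)) =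
  sum_list (seq 0 (S K)) (fun N => RtoC (INR (length (filter (fun v => k v =? N) l))) * G N).
Proof.
  induction l as [|x l IH]; sum_list_simpl.
  - symmetry. apply sum_list_zero. intros N _. cbn [INR]. ring.
  - transitivity (sum_list (seq 0 (S K)) (fun N => if k x =? N then G N else 0) +
                  sum_list (filter (fun v => k v <=? K) l) (fun v => G (k v))).
    + rewrite sum_list_seq_indicator. cbn [Nat.leb andb].
      replace (k x <? 0 + S K) with (k x <=? K)
        by (destruct (Nat.leb_spec (k x) K), (Nat.ltb_spec (k x) (0 + S K)); lia).
      destruct (k x <=? K); sum_list_simpl; ring.
    + rewrite IH, <- sum_list_plus. apply sum_list_ext. intros N _.
      destruct (k x =? N); sum_list_simpl; [|ring].
      rewrite S_INR, RtoC_plus. ring.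
Qed.

Lemma cexp_add a b : cexp (a + b) = cexp a * cexp b.
Proof.
  destruct a as [a1 a2], b as [b1 b2]. unfold cexp, Cmult, Cplus; cbn.
  rewrite exp_plus, cos_plus, sin_plus. apply injective_projections; cbn; ring.
Qed.

Lemma Cmod_cexp w : Cmod (cexp w) = exp (Re w).
Proof.
  unfold Cmod, cexp; cbn.
  replace (exp (Re w) * cos (Im w) * (exp (Re w) * cos (Im w) * 1) +
           exp (Re w) * sin (Im w) * (exp (Re w) * sin (Im w) * 1))%R
    with (Rsqr (exp (Re w)) * (Rsqr (sin (Im w)) + Rsqr (cos (Im w))))%R by (unfold Rsqr; ring).
  rewrite sin2_cos2, Rmult_1_r. apply sqrt_Rsqr. left; apply exp_pos.
Qed.

Lemma qpow_add z r s : qpow z (r + s) = qpow z r * qpow z s.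
Proof.
  unfold qpow. rewrite <- cexp_add. f_equal.
  destruct z as [x y]. unfold RtoC, Ci, Cmult, Cplus; cbn.
  apply injective_projections; cbn; ring.
Qed.

Lemma Cmod_qpow z r : Cmod (qpow z r) = exp (- (PI * Im z) * r).
Proof.
  unfold qpow. rewrite Cmod_cexp. f_equal.
  destruct z as [x y]. unfold RtoC, Ci, Cmult; cbn. ring.
Qed.

(* [qmod z = |q|] for the nome [q = e^{pi i z}]. *)
Definition qmod (z : C) : R := exp (- (PI * Im z)).

Lemma qmod_pos z : (0 < qmod z)%R.
Proof. apply exp_pos. Qed.

Lemma qmod_lt_1 z : (0 < Im z)%R -> (qmod z < 1)%R.
Proof.
  intros Hz. unfold qmod. rewrite <- exp_0. apply exp_increasing.
  pose proof PI_RGT_0. nra.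
Qed.

Lemma exp_le_mono x y : (x <= y)%R -> (exp x <= exp y)%R.
Proof. intros [H | ->]; [left; now apply exp_increasing | apply Rle_refl]. Qed.

Lemma exp_INR_mult k x : exp (INR k * x) = (exp x ^ k)%R.
Proof.
  induction k as [|k IH]; cbn [pow]; [now rewrite Rmult_0_l, exp_0|].
  rewrite S_INR, Rmult_plus_distr_r, exp_plus, IH, Rmult_1_l. ring.
Qed.

Lemma Cmod_qpow_le z r k :
  (0 < Im z)%R -> (INR k <= r)%R -> (Cmod (qpow z r) <= qmod z ^ k)%R.
Proof.
  intros Hz Hk. rewrite Cmod_qpow. unfold qmod. rewrite <- exp_INR_mult.
  apply exp_le_mono.
  assert (0 < PI * Im z)%R by (apply Rmult_lt_0_compat; [apply PI_RGT_0 | easy]). nra.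
Qed.

Definition Clim (u : nat -> C) (l : C) : Prop := is_lim_seq (fun n => Cmod (u n - l)) 0%R.

Lemma Clim_of_Cmod_le u l (b : nat -> R) :
  (forall n, Cmod (u n - l) <= b n)%R -> is_lim_seq b 0%R -> Clim u l.
Proof.
  intros Hb Hlim. apply (is_lim_seq_le_le (fun _ => 0%R) _ b); auto using is_lim_seq_const.
  intros n. split; [apply Cmod_ge_0 | apply Hb].
Qed.

Lemma Clim_ext u v l : (forall n, u n = v n) -> Clim u l -> Clim v l.
Proof. intros E. apply is_lim_seq_ext. intros n. now rewrite E. Qed.

Lemma Clim_const l : Clim (fun _ => l) l.
Proof.
  apply (Clim_of_Cmod_le _ _ (fun _ => 0%R)); [|apply is_lim_seq_const].
  intros n. replace (l - l) with (RtoC 0) by ring. rewrite Cmod_0. apply Rle_refl.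
Qed.

Lemma Clim_plus u v a b : Clim u a -> Clim v b -> Clim (fun n => u n + v n) (a + b).
Proof.
  intros Hu Hv. apply (Clim_of_Cmod_le _ _ (fun n => Cmod (u n - a) + Cmod (v n - b))%R).
  - intros n. replace (u n + v n - (a + b)) with ((u n - a) + (v n - b)) by ring.
    apply Cmod_triangle.
  - replace 0%R with (0 + 0)%R by ring. now apply is_lim_seq_plus'.
Qed.

Lemma Clim_opp u a : Clim u a -> Clim (fun n => - u n) (- a).
Proof.
  apply is_lim_seq_ext. intros n.
  replace (- u n - - a) with (- (u n - a)) by ring. now rewrite Cmod_opp.
Qed.

Lemma Clim_minus u v a b : Clim u a -> Clim v b -> Clim (fun n => u n - v n) (a - b).
Proof. intros Hu Hv. now apply Clim_plus, Clim_opp. Qed.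

Lemma Clim_mult u v a b : Clim u a -> Clim v b -> Clim (fun n => u n * v n) (a * b).
Proof.
  intros Hu Hv.
  apply (Clim_of_Cmod_le _ _ (fun n => Cmod (u n - a) * Cmod (v n - b)
                                     + Cmod a * Cmod (v n - b) + Cmod b * Cmod (u n - a))%R).
  - intros n.
    replace (u n * v n - a * b)
      with ((u n - a) * (v n - b) + a * (v n - b) + b * (u n - a)) by ring.
    rewrite <- !Cmod_mult. eapply Rle_trans; [apply Cmod_triangle|].
    apply Rplus_le_compat_r, Cmod_triangle.
  - replace 0%R with (0 * 0 + Cmod a * 0 + Cmod b * 0)%R by ring.
    apply is_lim_seq_plus'; [apply is_lim_seq_plus'|];
      apply is_lim_seq_mult'; auto using is_lim_seq_const.
Qed.

Lemma Clim_pow u a k : Clim u a -> Clim (fun n => pow_n (u n) k) (pow_n a k).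
Proof.
  intros Hu. induction k as [|k IH].
  - apply (Clim_ext (fun _ => pow_n a 0)); [easy | apply Clim_const].
  - now apply Clim_mult.
Qed.

Lemma Clim_unique u a b : Clim u a -> Clim u b -> a = b.
Proof.
  intros Ha Hb.
  assert (H : Rbar_le (Cmod (a - b)) 0%R).
  { apply (is_lim_seq_le (fun _ => Cmod (a - b)) (fun n => Cmod (u n - a) + Cmod (u n - b))%R).
    - intros n. replace (a - b) with (- (u n - a) + (u n - b)) by ring.
      rewrite <- (Cmod_opp (u n - a)). apply Cmod_triangle.
    - apply is_lim_seq_const.
    - replace (Finite 0%R) with (Finite (0 + 0)%R) by (f_equal; ring).
      now apply is_lim_seq_plus'. }
  cbn in H. assert (Hab : a - b = 0) by (apply Cmod_eq_0; pose proof (Cmod_ge_0 (a - b)); lra).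
  replace a with (a - b + b) by ring. rewrite Hab. ring.
Qed.

Lemma Clim_of_Re_Im u (a b : R) :
  is_lim_seq (fun n => Re (u n)) a -> is_lim_seq (fun n => Im (u n)) b -> Clim u (a, b).
Proof.
  intros Ha Hb.
  apply (Clim_of_Cmod_le _ _ (fun n => sqrt 2 * (Rabs (Re (u n) - a) + Rabs (Im (u n) - b)))%R).
  - intros n. eapply Rle_trans; [apply Cmod_2Rmax|].
    apply Rmult_le_compat_l; [apply sqrt_pos|]. cbn.
    apply Rmax_lub; pose proof (Rabs_pos (fst (u n) - a)); pose proof (Rabs_pos (snd (u n) - b));
      unfold Re, Im, Rminus in *; lra.
  - assert (Hlim0 : forall (w : nat -> R) (c : R),
               is_lim_seq w c -> is_lim_seq (fun n => Rabs (w n - c)) 0%R).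
    { intros w c Hw. apply -> is_lim_seq_abs_0. replace 0%R with (c - c)%R by ring.
      apply is_lim_seq_minus'; [exact Hw | apply is_lim_seq_const]. }
    replace 0%R with (sqrt 2 * (0 + 0))%R by ring.
    apply is_lim_seq_mult'; [apply is_lim_seq_const | apply is_lim_seq_plus'; auto].
Qed.

Lemma Re_sum_list_seq f M : Re (sum_list (seq 0 (S M)) f) = sum_n (fun k => Re (f k)) M.
Proof.
  induction M as [|M IH].
  - rewrite sum_O. cbn. unfold Re, Im. ring.
  - rewrite seq_S, sum_list_app, sum_Sn, <- IH. cbn. unfold Re, Im. ring.
Qed.

Lemma Im_sum_list_seq f M : Im (sum_list (seq 0 (S M)) f) = sum_n (fun k => Im (f k)) M.
Proof.
  induction M as [|M IH].
  - rewrite sum_O. cbn. unfold Re, Im. ring.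
  - rewrite seq_S, sum_list_app, sum_Sn, <- IH. cbn. unfold Re, Im. ring.
Qed.

Lemma CSeries_Clim (r : R) f :
  (0 <= r < 1)%R -> (forall k, Cmod (f k) <= r ^ k)%R ->
  Clim (fun M => sum_list (seq 0 (S M)) f) (CSeries f).
Proof.
  intros Hr Hf.
  assert (Hgeom : ex_series (fun k => r ^ k)%R).
  { exists (/ (1 - r))%R. apply is_series_geom. rewrite Rabs_right; lra. }
  assert (Hdom : forall p : C -> R, (forall c, Rabs (p c) <= Cmod c)%R ->
                 ex_series (fun k => p (f k))).
  { intros p Hp. apply (@ex_series_le R_AbsRing R_CompleteNormedModule _ (fun k => r ^ k)%R);
      [|exact Hgeom].
    intros n. eapply Rle_trans; [apply Hp | apply Hf]. }
  assert (HRe := Series_correct _ (Hdom Re re_le_Cmod)).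
  assert (HIm := Series_correct _ (Hdom Im
    (fun c => Rle_trans _ _ _ (Rmax_r _ _) (Rmax_Cmod c)))).
  apply Clim_of_Re_Im.
  - eapply is_lim_seq_ext; [|exact HRe]. intros n. now rewrite Re_sum_list_seq.
  - eapply is_lim_seq_ext; [|exact HIm]. intros n. now rewrite Im_sum_list_seq.
Qed.

Lemma sumZ_Clim (r : R) f :
  (0 <= r < 1)%R ->
  (forall k, Cmod (f (Z.of_nat k)) <= r ^ k)%R ->
  (forall k, Cmod (f (- Z.of_nat (S k))%Z) <= r ^ k)%R ->
  Clim (fun M => sum_list (zrange M) f) (sumZ f).
Proof.
  intros Hr Hpos Hneg.
  apply (Clim_ext (fun M => sum_list (seq 0 (S M)) (fun k => f (Z.of_nat k))
                          + sum_list (seq 0 (S M)) (fun k => f (- Z.of_nat (S k))%Z))).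
  - intros M. unfold zrange. now rewrite sum_list_app, !sum_list_map.
  - apply Clim_plus; now apply (CSeries_Clim r).
Qed.

Lemma INR_le_sq_plus k s : (0 <= s)%R -> (INR k <= (INR k + s) ^ 2)%R.
Proof.
  intros Hs. assert (INR k <= INR k * INR k)%R by (rewrite <- mult_INR; apply le_INR; nia).
  pose proof (pos_INR k). nra.
Qed.

Lemma IZR_neg_succ k : IZR (- Z.of_nat (S k)) = (- (INR k + 1))%R.
Proof. now rewrite opp_IZR, <- INR_IZR_INZ, S_INR. Qed.

Lemma INR_le_sq_of_nat k : (INR k <= IZR (Z.of_nat k) ^ 2)%R.
Proof.
  rewrite <- INR_IZR_INZ. replace (INR k ^ 2)%R with ((INR k + 0) ^ 2)%R by ring.
  apply INR_le_sq_plus, Rle_refl.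
Qed.

Lemma INR_le_sq_neg_succ k : (INR k <= IZR (- Z.of_nat (S k)) ^ 2)%R.
Proof.
  rewrite IZR_neg_succ. replace ((- (INR k + 1)) ^ 2)%R with ((INR k + 1) ^ 2)%R by ring.
  apply INR_le_sq_plus. lra.
Qed.

Lemma Cmod_sign_mult n x : Cmod (RtoC ((-1) ^ n) * x) = Cmod x.
Proof. now rewrite Cmod_mult, Cmod_R, pow_1_abs, Rmult_1_l. Qed.

(** * Jacobi's identity *)

Definition theta2_term (z : C) (m : Z) : C := qpow z ((IZR m + /2) ^ 2).
Definition theta3_term (z : C) (m : Z) : C := qpow z (IZR m ^ 2).
Definition theta4_term (z : C) (m : Z) : C :=
  RtoC ((-1) ^ Z.to_nat (m * m)) * qpow z (IZR m ^ 2).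

Section Truncations.
Variable z : C.
Hypothesis Hz : (0 < Im z)%R.

Let qmod_range : (0 <= qmod z < 1)%R.
Proof. pose proof (qmod_pos z). pose proof (qmod_lt_1 z Hz). lra. Qed.

Lemma theta3_Clim :
  Clim (fun M => sum_list (zrange M) (theta3_term z)) (theta3 z).
Proof.
  apply (sumZ_Clim (qmod z)); [exact qmod_range| |]; intros k; apply Cmod_qpow_le;
    auto using INR_le_sq_of_nat, INR_le_sq_neg_succ.
Qed.

Lemma theta4_Clim :
  Clim (fun M => sum_list (zrange M) (theta4_term z)) (theta4 z).
Proof.
  apply (sumZ_Clim (qmod z)); [exact qmod_range| |];
    intros k; unfold theta4_term; rewrite Cmod_sign_mult; apply Cmod_qpow_le;
    auto using INR_le_sq_of_nat, INR_le_sq_neg_succ.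
Qed.

Lemma theta2_Clim :
  Clim (fun M => sum_list (zrange M) (theta2_term z)) (theta2 z).
Proof.
  apply (sumZ_Clim (qmod z)); [exact qmod_range| |]; intros k; apply Cmod_qpow_le; auto.
  - rewrite <- INR_IZR_INZ. apply INR_le_sq_plus. lra.
  - rewrite IZR_neg_succ. replace ((- (INR k + 1) + / 2) ^ 2)%R with ((INR k + / 2) ^ 2)%R by field.
    apply INR_le_sq_plus. lra.
Qed.

End Truncations.

Definition box_term (f : Z -> C) (v : Z4) : C :=
  let '(a, b, c, d) := v in f a * f b * f c * f d.

Lemma pow4_sum_zrange f M : pow_n (sum_list (zrange M) f) 4 = sum_list (box M) (box_term f).
Proof.
  set (S := sum_list (zrange M) f).
  transitivity (S * S * S * S); [cbn; ring|].
  unfold S, box. rewrite <- !sum_list_prod.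
  apply sum_list_ext. now intros [[[a b] c] d] _.
Qed.

Definition qterm (z : C) (N : nat) : C := qpow z (INR N).

Lemma INR_Z_to_nat x : (0 <= x)%Z -> INR (Z.to_nat x) = IZR x.
Proof. intros Hx. now rewrite INR_IZR_INZ, Z2Nat.id. Qed.

Lemma box_term_theta3 z v :
  box_term (theta3_term z) v = qterm z (Z.to_nat (sqnorm v)).
Proof.
  unfold qterm. rewrite INR_Z_to_nat by apply sqnorm_nonneg.
  destruct v as [[[a b] c] d]. cbn [box_term sqnorm]. unfold theta3_term. rewrite <- !qpow_add.
  f_equal. rewrite !plus_IZR, !mult_IZR. ring.
Qed.

Lemma box_term_theta4 z v :
  box_term (theta4_term z) v =
  RtoC ((-1) ^ Z.to_nat (sqnorm v)) * qterm z (Z.to_nat (sqnorm v)).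
Proof.
  rewrite <- box_term_theta3. destruct v as [[[a b] c] d]. cbn [box_term sqnorm].
  unfold theta4_term, theta3_term.
  pose proof (Z.square_nonneg a); pose proof (Z.square_nonneg b).
  pose proof (Z.square_nonneg c); pose proof (Z.square_nonneg d).
  rewrite !Z2Nat.inj_add by lia. rewrite !pow_add, !RtoC_mult. ring.
Qed.

Lemma box_term_theta2 z v :
  box_term (theta2_term z) v = qterm z (Z.to_nat (shifted_sqnorm v)).
Proof.
  unfold qterm. rewrite INR_Z_to_nat by (apply Z.lt_le_incl, shifted_sqnorm_pos).
  destruct v as [[[a b] c] d]. cbn [box_term shifted_sqnorm]. unfold theta2_term.
  rewrite <- !qpow_add.
  f_equal. rewrite !plus_IZR, !mult_IZR, !plus_IZR. field.
Qed.

Lemma count_Z_to_nat (k : Z4 -> Z) (K N : nat) : (forall v, (0 <= k v)%Z) ->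
  length (filter (fun v => Z.to_nat (k v) =? N) (box K)) = count (fun v => (k v =? Z.of_nat N)%Z) K.
Proof.
  intros Hk. unfold count. f_equal. apply filter_ext. intros v. specialize (Hk v).
  destruct (Nat.eqb_spec (Z.to_nat (k v)) N), (Z.eqb_spec (k v) (Z.of_nat N)); lia.
Qed.

Lemma count_shifted_sqnorm_weight (M N : nat) : (N <= M * M)%nat ->
  INR (count (fun v => (shifted_sqnorm v =? Z.of_nat N)%Z) M) =
  ((1 - (-1) ^ N) * INR (count (fun v => (sqnorm v =? Z.of_nat N)%Z) M))%R.
Proof.
  intros HN. destruct (Nat.Even_or_Odd N) as [[m ->] | [m ->]].
  - rewrite count_shifted_sqnorm_even, pow_1_even.
    + cbn [INR]. ring.
    + now rewrite Nat2Z.inj_mul, Z.odd_mul.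
  - rewrite count_shifted_sqnorm_odd
      by (rewrite ?Nat2Z.inj_add, ?Nat2Z.inj_mul; auto using Z.odd_odd).
    rewrite mult_INR, Nat.add_1_r, pow_1_odd. cbn [INR]. ring.
Qed.

Definition tail_sum {A} (l : list A) (k : A -> nat) (G : nat -> C) (K : nat) : C :=
  sum_list (filter (fun v => negb (k v <=? K)) l) (fun v => G (k v)).

Lemma sum_list_split_at {A} (l : list A) (k : A -> nat) (G : nat -> C) (K : nat) :
  sum_list l (fun v => G (k v)) =
  sum_list (seq 0 (S K)) (fun N => RtoC (INR (length (filter (fun v => k v =? N) l))) * G N)
  + tail_sum l k G K.
Proof. now rewrite (sum_list_filter (fun v => k v <=? K)), sum_list_group. Qed.

Lemma Cmod_tail_sum_le {A} (l : list A) (k : A -> nat) (G : nat -> C) (K : nat) (B : R) :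
  (0 <= B)%R -> (forall N, (K < N)%nat -> Cmod (G N) <= B)%R ->
  (Cmod (tail_sum l k G K) <= INR (length l) * B)%R.
Proof.
  intros HB HG. eapply Rle_trans.
  - apply Cmod_sum_list_le. intros v Hv. apply filter_In in Hv as [_ Hv].
    apply HG. apply negb_true_iff, Nat.leb_gt in Hv. exact Hv.
  - apply Rmult_le_compat_r; [exact HB|]. apply le_INR, filter_length_le.
Qed.

Definition theta34_term (z : C) (N : nat) : C := RtoC (1 - (-1) ^ N) * qterm z N.

Definition theta_defect (z : C) (M : nat) : C :=
  pow_n (sum_list (zrange M) (theta3_term z)) 4
  - pow_n (sum_list (zrange M) (theta4_term z)) 4
  - pow_n (sum_list (zrange M) (theta2_term z)) 4.

(* Below [q ^ (M * M)] the box holds every contributing lattice point, so the counting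
   identity cancels those coefficients exactly. *)
Lemma theta_defect_eq_tails z M :
  theta_defect z M =
  tail_sum (box M) (fun v => Z.to_nat (sqnorm v)) (theta34_term z) (M * M)
  - tail_sum (box M) (fun v => Z.to_nat (shifted_sqnorm v)) (qterm z) (M * M).
Proof.
  unfold theta_defect. rewrite !pow4_sum_zrange, <- sum_list_minus.
  set (k3 v := Z.to_nat (sqnorm v)). set (k2 v := Z.to_nat (shifted_sqnorm v)).
  rewrite (sum_list_ext _ _ (fun v => theta34_term z (k3 v)))
    by (intros v _; unfold theta34_term, k3;
        rewrite box_term_theta3, box_term_theta4, RtoC_minus; ring).
  rewrite (sum_list_ext _ (box_term (theta2_term z)) (fun v => qterm z (k2 v)))
    by (intros v _; apply box_term_theta2).
  rewrite (sum_list_split_at _ k3 _ (M * M)), (sum_list_split_at _ k2 _ (M * M)).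
  rewrite (sum_list_ext (seq 0 _) (fun N => _ * theta34_term z N)
             (fun N => RtoC (INR (length (filter (fun v => k2 v =? N) (box M)))) * qterm z N)).
  - ring.
  - intros N HN. apply in_seq in HN. unfold theta34_term, k2, k3.
    rewrite !count_Z_to_nat
      by (apply sqnorm_nonneg || (intros; apply Z.lt_le_incl, shifted_sqnorm_pos)).
    rewrite count_shifted_sqnorm_weight, RtoC_mult by lia. ring.
Qed.

Lemma theta_defect_bound z M : (0 < Im z)%R ->
  (Cmod (theta_defect z M) <= 3 * INR (length (box M)) * qmod z ^ (M * M))%R.
Proof.
  intros Hz. rewrite theta_defect_eq_tails.
  pose proof (qmod_pos z) as Hq.
  assert (Hq_pow : (0 <= qmod z ^ (M * M))%R) by (apply pow_le; lra).
  assert (Hterm : forall N, (M * M < N)%nat -> (Cmod (qterm z N) <= qmod z ^ (M * M))%R)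
    by (intros N HN; apply Cmod_qpow_le; [exact Hz | apply le_INR; lia]).
  eapply Rle_trans; [apply Cmod_triangle|]. rewrite Cmod_opp.
  assert (Cmod (tail_sum (box M) (fun v => Z.to_nat (sqnorm v)) (theta34_term z) (M * M))
          <= INR (length (box M)) * (2 * qmod z ^ (M * M)))%R.
  { apply Cmod_tail_sum_le; [lra|]. intros N HN. unfold theta34_term.
    rewrite Cmod_mult, Cmod_R. apply Rmult_le_compat; auto using Rabs_pos, Cmod_ge_0.
    eapply Rle_trans; [apply Rabs_triang|]. rewrite Rabs_Ropp, pow_1_abs, Rabs_R1. lra. }
  assert (Cmod (tail_sum (box M) (fun v => Z.to_nat (shifted_sqnorm v)) (qterm z) (M * M))
          <= INR (length (box M)) * qmod z ^ (M * M))%R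
    by (apply Cmod_tail_sum_le; auto).
  pose proof (pos_INR (length (box M))). nra.
Qed.

Lemma length_box M : INR (length (box M)) = ((2 * (INR M + 1)) ^ 4)%R.
Proof.
  unfold box, Z4, zrange. rewrite !length_prod, length_app, !length_map, length_seq.
  rewrite !mult_INR, plus_INR, S_INR. cbn. ring.
Qed.

Lemma pow2_ge_succ M : (INR M + 1 <= 2 ^ M)%R.
Proof.
  induction M as [|M IH]; [cbn; lra|].
  rewrite S_INR. cbn [pow]. assert (1 <= 2 ^ M)%R by (apply pow_R1_Rle; lra). lra.
Qed.

(* Eventually [r ^ M <= 1/32], and then [r ^ (M * M) <= 32 ^ (-M)] beats
   [(2M + 2) ^ 4 <= 16 * 16 ^ M]. *)
Lemma poly_geom_sq_lim (r : R) : (0 <= r < 1)%R ->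
  is_lim_seq (fun M => (2 * (INR M + 1)) ^ 4 * r ^ (M * M))%R 0%R.
Proof.
  intros Hr.
  assert (Hg := is_lim_seq_geom r). rewrite Rabs_right in Hg by lra.
  specialize (Hg (proj2 Hr)). apply is_lim_seq_spec in Hg.
  destruct (Hg (mkposreal (/32) ltac:(lra))) as [N HN]. cbn in HN.
  apply (is_lim_seq_le_le_loc (fun _ => 0%R) _ (fun M => 16 * (/2) ^ M)%R).
  - exists N. intros M HM. specialize (HN M HM).
    rewrite Rminus_0_r, Rabs_right in HN by (apply Rle_ge, pow_le; lra).
    assert (0 <= (r ^ M) ^ M)%R by (apply pow_le, pow_le; lra).
    assert (0 <= 16 ^ M)%R by (apply pow_le; lra).
    assert (H16 : ((2 * (INR M + 1)) ^ 4 <= 16 * 16 ^ M)%R).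
    { replace (16 ^ M)%R with ((2 ^ M) ^ 4)%R
        by (rewrite <- pow_mult, Nat.mul_comm, pow_mult; f_equal; cbn; ring).
      replace (16 * (2 ^ M) ^ 4)%R with ((2 * 2 ^ M) ^ 4)%R by ring.
      apply pow_incr. pose proof (pow2_ge_succ M). pose proof (pos_INR M). lra. }
    assert (Hhalf : ((r ^ M) ^ M * 16 ^ M <= (/2) ^ M)%R).
    { rewrite <- Rpow_mult_distr. apply pow_incr.
      split; [apply Rmult_le_pos; [apply pow_le|]|]; lra. }
    pose proof (pos_INR M). rewrite pow_mult.
    split; [apply Rmult_le_pos; [apply pow_le|]|]; nra.
  - apply is_lim_seq_const.
  - replace (Finite 0%R) with (Rbar_mult 16%R 0%R) by (cbn; f_equal; ring).
    apply is_lim_seq_scal_l, is_lim_seq_geom. rewrite Rabs_right; lra.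
Qed.

Lemma jacobi_identity z : (0 < Im z)%R ->
  pow_n (theta3 z) 4 = pow_n (theta2 z) 4 + pow_n (theta4 z) 4 :> C.
Proof.
  intros Hz.
  assert (Hlim : Clim (theta_defect z)
                      (pow_n (theta3 z) 4 - pow_n (theta4 z) 4 - pow_n (theta2 z) 4)).
  { apply Clim_minus; [apply Clim_minus|]; apply Clim_pow;
      auto using theta3_Clim, theta4_Clim, theta2_Clim. }
  assert (Hzero : Clim (theta_defect z) 0).
  { apply (Clim_of_Cmod_le _ _ (fun M => 3 * ((2 * (INR M + 1)) ^ 4 * qmod z ^ (M * M)))%R).
    - intros M. replace (theta_defect z M - 0) with (theta_defect z M) by ring.
      rewrite <- Rmult_assoc, <- length_box. now apply theta_defect_bound.
    - replace 0%R with (3 * 0)%R by ring.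
      apply is_lim_seq_mult'; [apply is_lim_seq_const | apply poly_geom_sq_lim].
      pose proof (qmod_pos z). pose proof (qmod_lt_1 z Hz). lra. }
  assert (Hsolve : forall a b c : C, a - b - c = 0 -> a = c + b)
    by (intros a b c E; replace a with (a - b - c + c + b) by ring; rewrite E; ring).
  exact (Hsolve _ _ _ (Clim_unique _ _ _ Hlim Hzero)).
Qed.

(** * Power sums of the roots of a cubic *)

Lemma Cpow_0 (x : C) : pow_n x 0 = 1 :> C.
Proof. reflexivity. Qed.

Lemma Cpow_S (x : C) n : pow_n x (S n) = x * pow_n x n :> C.
Proof. reflexivity. Qed.

Lemma Cpow_add (x : C) m n : pow_n x (m + n) = pow_n x m * pow_n x n :> C.
Proof. exact (pow_n_plus x m n). Qed.

Lemma Cpow_mult (x : C) m n : pow_n x (m * n) = pow_n (pow_n x m) n :> C.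
Proof.
  induction n as [|n IH]; [now rewrite Nat.mul_0_r|].
  rewrite Nat.mul_succ_r, Cpow_add, IH, Cpow_S. ring.
Qed.

Lemma Cpow_Cmult (x y : C) n : pow_n (x * y) n = pow_n x n * pow_n y n :> C.
Proof. induction n as [|n IH]; rewrite ?Cpow_0, ?Cpow_S, ?IH; ring. Qed.

Lemma RtoC_pow (x : R) n : RtoC (x ^ n) = pow_n (RtoC x) n.
Proof. induction n as [|n IH]; [easy|]. now rewrite Cpow_S, <- IH, <- RtoC_mult. Qed.

Section WaringSum.
Variables D E : C.

Definition waring_term (n i : nat) : C :=
  RtoC (INR (waring_coeff n i)) * pow_n D i * pow_n E (n - 3 * i).

Definition waring_sum (n : nat) : C := sum_list (seq 0 (S n)) (waring_term n).

Lemma waring_term_vanish n i : (n < 3 * i)%nat -> waring_term n i = 0.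
Proof. intros Hi. unfold waring_term. rewrite waring_coeff_vanish by exact Hi. cbn [INR]. ring. Qed.

Lemma waring_sum_ext n N : (n <= N)%nat -> sum_list (seq 0 (S N)) (waring_term n) = waring_sum n.
Proof.
  intros HN. unfold waring_sum. replace (S N) with (S n + (N - n))%nat by lia.
  rewrite seq_app, sum_list_app, (sum_list_zero (seq (0 + S n) _)); [ring|].
  intros i Hi. apply in_seq in Hi. apply waring_term_vanish. lia.
Qed.

Lemma waring_term_shift m k i :
  pow_n E k * waring_term m i = RtoC (INR (waring_coeff m i)) * pow_n D i * pow_n E (m + k - 3 * i).
Proof.
  unfold waring_term. destruct (le_lt_dec (3 * i) m) as [Hi | Hi].
  - replace (m + k - 3 * i)%nat with (k + (m - 3 * i))%nat by lia. rewrite Cpow_add. ring.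
  - rewrite waring_coeff_vanish by exact Hi. cbn [INR]. ring.
Qed.

Lemma waring_term_rec n i : (1 <= n)%nat ->
  waring_term (n + 3) i =
  RtoC 2 * E * waring_term (n + 2) i - E * E * waring_term (n + 1) i
  + match i with O => 0 | S j => D * waring_term n j end.
Proof.
  intros Hn.
  assert (Hc := waring_coeff_rec n i Hn). apply (f_equal INR) in Hc.
  rewrite !plus_INR, !mult_INR in Hc.
  pose proof (waring_term_shift (n + 2) 1 i) as H1.
  pose proof (waring_term_shift (n + 1) 2 i) as H2.
  rewrite !Cpow_S, Cpow_0 in H1. rewrite !Cpow_S, Cpow_0 in H2.
  replace (n + 2 + 1)%nat with (n + 3)%nat in H1 by lia.
  replace (n + 1 + 2)%nat with (n + 3)%nat in H2 by lia.
  replace (RtoC 2 * E * waring_term (n + 2) i)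
    with (RtoC 2 * (E * 1 * waring_term (n + 2) i)) by ring.
  replace (E * E * waring_term (n + 1) i) with (E * (E * 1) * waring_term (n + 1) i) by ring.
  rewrite H1, H2. unfold waring_term.
  destruct i as [|j].
  - cbn [INR] in Hc.
    replace (INR (waring_coeff (n + 3) 0))
      with (2 * INR (waring_coeff (n + 2) 0) - INR (waring_coeff (n + 1) 0))%R by lra.
    rewrite RtoC_minus, RtoC_mult. ring.
  - cbn [INR] in Hc. replace (n - 3 * j)%nat with (n + 3 - 3 * S j)%nat by lia.
    replace (INR (waring_coeff (n + 3) (S j)))
      with (2 * INR (waring_coeff (n + 2) (S j)) - INR (waring_coeff (n + 1) (S j))
            + INR (waring_coeff n j))%R
      by lra.
    rewrite Cpow_S, RtoC_plus, RtoC_minus, RtoC_mult. ring.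
Qed.

Lemma waring_sum_rec n : (1 <= n)%nat ->
  waring_sum (n + 3) =
  RtoC 2 * E * waring_sum (n + 2) - E * E * waring_sum (n + 1) + D * waring_sum n.
Proof.
  intros Hn.
  rewrite <- (waring_sum_ext (n + 2) (n + 3)), <- (waring_sum_ext (n + 1) (n + 3)) by lia.
  unfold waring_sum at 1.
  rewrite (sum_list_ext _ _ _ (fun i _ => waring_term_rec n i Hn)).
  rewrite sum_list_plus, sum_list_minus, !sum_list_scal. f_equal.
  change (seq 0 (S (n + 3))) with (0%nat :: seq 1 (n + 3)).
  rewrite sum_list_cons, <- seq_shift, sum_list_map. cbv beta iota.
  replace (n + 3)%nat with (S (n + 2)) by lia.
  rewrite sum_list_scal, waring_sum_ext by lia. ring.
Qed.

End WaringSum.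

Lemma rec3_ext {A} (f g : nat -> A) (step : A -> A -> A -> A) :
  (forall n, (1 <= n)%nat -> f (n + 3)%nat = step (f (n + 2)%nat) (f (n + 1)%nat) (f n)) ->
  (forall n, (1 <= n)%nat -> g (n + 3)%nat = step (g (n + 2)%nat) (g (n + 1)%nat) (g n)) ->
  f 1%nat = g 1%nat -> f 2%nat = g 2%nat -> f 3%nat = g 3%nat ->
  forall n, (1 <= n)%nat -> f n = g n.
Proof.
  intros Hf Hg H1 H2 H3.
  assert (H : forall k, f (k + 1)%nat = g (k + 1)%nat /\ f (k + 2)%nat = g (k + 2)%nat
                        /\ f (k + 3)%nat = g (k + 3)%nat).
  { induction k as [|k [IH1 [IH2 IH3]]]; [easy|].
    replace (S k + 1)%nat with (k + 2)%nat by lia. replace (S k + 2)%nat with (k + 3)%nat by lia.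
    replace (S k + 3)%nat with (k + 1 + 3)%nat by lia.
    rewrite (Hf (k + 1)%nat), (Hg (k + 1)%nat) by lia.
    replace (k + 1 + 2)%nat with (k + 3)%nat by lia.
    replace (k + 1 + 1)%nat with (k + 2)%nat by lia. now rewrite IH1, IH2, IH3. }
  intros n Hn. replace n with (n - 1 + 1)%nat by lia. apply H.
Qed.

Lemma pow_rec_of_cubic (D E t : C) n :
  t * t * t = RtoC 2 * E * (t * t) - E * E * t + D ->
  pow_n t (n + 3) = RtoC 2 * E * pow_n t (n + 2) - E * E * pow_n t (n + 1) + D * pow_n t n :> C.
Proof.
  intros Ht. rewrite !Cpow_add, !Cpow_S, !Cpow_0.
  transitivity (pow_n t n * (t * t * t)); [ring|]. rewrite Ht. ring.
Qed.

Lemma power_sum_waring (x y : C) n : (1 <= n)%nat ->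
  pow_n (x * x) n + pow_n ((x + y) * (x + y)) n + pow_n (y * y) n =
  waring_sum (x * x * ((x + y) * (x + y)) * (y * y)) (x * x + x * y + y * y) n.
Proof.
  set (D := x * x * ((x + y) * (x + y)) * (y * y)). set (E := x * x + x * y + y * y).
  revert n.
  apply (rec3_ext (fun n => pow_n (x * x) n + pow_n ((x + y) * (x + y)) n + pow_n (y * y) n)
                  (waring_sum D E) (fun p q r => RtoC 2 * E * p - E * E * q + D * r)).
  3-5: unfold waring_sum, waring_term; cbn [seq]; rewrite !sum_list_cons, sum_list_nil;
    cbn [waring_coeff binom Nat.sub Nat.mul Nat.add]; rewrite !INR_IZR_INZ; cbn [Z.of_nat];
    rewrite !Cpow_S, !Cpow_0; unfold D, E; ring.
  - intros m Hm. rewrite !(pow_rec_of_cubic D E) by (unfold D, E; ring). ring.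
  - intros m Hm. now apply waring_sum_rec.
Qed.

Lemma sum_n_m_sum_list (f : nat -> C) m k : sum_n_m f (S m) (m + k) = sum_list (seq (S m) k) f.
Proof.
  induction k as [|k IH].
  - rewrite Nat.add_0_r, sum_n_m_zero by lia. reflexivity.
  - rewrite Nat.add_succ_r, sum_n_Sm by lia.
    rewrite IH, seq_S, sum_list_app, sum_list_cons, sum_list_nil, Cplus_0_r.
    now replace (S m + k)%nat with (S (m + k)) by lia.
Qed.

Lemma waring_sum_split D E n :
  waring_sum D E n =
  RtoC 2 * pow_n E n
  + sum_n_m (fun i => RtoC (INR n / INR i * Binomial.C (n - i - 1) (2 * i - 1))
                      * pow_n D i * pow_n E (n - 3 * i)) 1 (n / 3).
Proof.
  unfold waring_sum. change (seq 0 (S n)) with (0%nat :: seq 1 n). rewrite sum_list_cons.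
  f_equal.
  - unfold waring_term. rewrite waring_coeff_0, Nat.sub_0_r, Cpow_0, INR_IZR_INZ.
    cbn [Z.of_nat]. ring.
  - pose proof (Nat.div_mod_eq n 3). pose proof (Nat.mod_upper_bound n 3 ltac:(lia)).
    replace (seq 1 n) with (seq 1 (n / 3) ++ seq (1 + n / 3) (n - n / 3))
      by (rewrite <- seq_app; f_equal; lia).
    rewrite sum_list_app, (sum_list_zero (seq (1 + n / 3) _)), (sum_n_m_sum_list _ 0 (n / 3)).
    + rewrite Cplus_0_r. apply sum_list_ext. intros i Hi. apply in_seq in Hi.
      unfold waring_term. now rewrite waring_coeff_eq by lia.
    + intros i Hi. apply in_seq in Hi. apply waring_term_vanish. lia.
Qed.

Lemma theta_power_sum_waring (t2 t3 t4 : C) n : (1 <= n)%nat ->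
  pow_n t3 4 = pow_n t2 4 + pow_n t4 4 :> C ->
  pow_n t2 (8 * n) + pow_n t3 (8 * n) + pow_n t4 (8 * n) =
  waring_sum (RtoC 256 * pow_n (t2 * t3 * t4 / RtoC 2) 8)
             (RtoC (/ 2) * (pow_n t2 8 + pow_n t3 8 + pow_n t4 8)) n.
Proof.
  intros Hn Hjac.
  assert (H8 : forall t : C, pow_n t 8 = pow_n t 4 * pow_n t 4 :> C)
    by (intros t; rewrite <- Cpow_add; reflexivity).
  rewrite !Cpow_mult, !H8, Hjac, power_sum_waring by exact Hn.
  unfold Cdiv. rewrite !Cpow_Cmult, Hjac, <- RtoC_inv, <- RtoC_pow by lra.
  set (x := pow_n t2 4). set (y := pow_n t4 4).
  f_equal.
  - transitivity (RtoC (256 * (/ 2) ^ 4 * (/ 2) ^ 4) * (x * x * ((x + y) * (x + y)) * (y * y))).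
    + replace (256 * (/ 2) ^ 4 * (/ 2) ^ 4)%R with 1%R by field. ring.
    + rewrite !RtoC_mult. ring.
  - transitivity (RtoC (/ 2 * 2) * (x * x + x * y + y * y)).
    + rewrite Rinv_l by lra. ring.
    + rewrite RtoC_mult. ring.
Qed.

Theorem theorem2p2 (z : C) (hz : (0 < Im z)%R) (n : nat) (hn : (0 < n)%nat) :
  h n z =
  RtoC 2 * pow_n (E4 z) n
  + sum_n_m (fun i : nat =>
      RtoC (INR n / INR i * Binomial.C (n - i - 1) (2 * i - 1) * 2 ^ (8 * i))%R
      * pow_n (Delta24 z) i * pow_n (E4 z) (n - 3 * i))
      1 (n / 3).
Proof.
  unfold h. rewrite (theta_power_sum_waring (theta2 z) (theta3 z) (theta4 z) n hn)
    by exact (jacobi_identity z hz).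
  fold (E4 z) (Delta24 z).
  rewrite waring_sum_split. f_equal. apply sum_n_m_ext. intros i.
  rewrite Cpow_Cmult, <- RtoC_pow, !RtoC_mult, pow_mult.
  replace (2 ^ 8)%R with 256%R by ring.
  match goal with |- ?a = ?b => change (@eq C a b) end. ring.
Qed.
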